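(* The assignment $r_1\mapsto R_1R_6$, $r_2\mapsto R_3R_5$, $r_3\mapsto R_4$, $r_4\mapsto R_2$, $e_1\mapsto E_1E_6$, $e_2\mapsto E_3E_5$, $e_3\mapsto E_4$, $e_4\mapsto E_2$ extends to a homomorphism of unital $\mathbb Z[\delta^{\pm1}]$-algebras $\phi:\mathrm{Br}(\mathrm{F}_4)\to\mathrm{Br}(\mathrm{E}_6)$.
   Context: Let $\delta$ be an indeterminate. $\mathrm{Br}(\mathrm{F}_4)$ is the unital associative $\mathbb Z[\delta^{\pm1}]$-algebra generated by $r_1,r_2,r_3,r_4,e_1,e_2,e_3,e_4$ subject to the relations: $r_i^2=1$ and $r_ie_i=e_ir_i=e_i$ for all $i$; $e_i^2=\delta e_i$ for $i\in\{3,4\}$; $e_i^2=\delta^2e_i$ for $i\in\{1,2\}$; for $\{i,j\}\in\{\{1,3\},\{1,4\},\{2,4\}\}$: $r_ir_j=r_jr_i$, $e_ir_j=r_je_i$, $e_ie_j=e_je_i$; for $(i,j)\in\{(1,2),(2,1),(3,4),(4,3)\}$: $r_ir_jr_i=r_jr_ir_j$, $r_jr_ie_j=e_ie_j$, $r_ie_jr_i=r_je_ir_j$; and $r_2r_3r_2r_3=r_3r_2r_3r_2$, $r_2r_3e_2=r_3e_2$, $r_2e_3r_2e_3=e_3e_2e_3$, $(r_2r_3r_2)e_3=e_3(r_2r_3r_2)$, $e_2r_3e_2=\delta e_2$, $e_2e_3e_2=\delta e_2$, $e_2r_3r_2=e_2r_3$, $e_2e_3r_2=e_2e_3$. The Brauer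 algebra $\mathrm{Br}(\mathrm{E}_6)$ is the unital $\mathbb Z[\delta^{\pm1}]$-algebra generated by $R_1,\dots,R_6,E_1,\dots,E_6$, where the nodes $1,\dots,6$ form the $\mathrm{E}_6$ Dynkin diagram with edges $1-3$, $3-4$, $4-5$, $5-6$, $2-4$, subject to: $R_i^2=1$, $R_iE_i=E_iR_i=E_i$, $E_i^2=\delta E_i$ for all $i$; for distinct non-adjacent $i,j$: $R_iR_j=R_jR_i$, $E_iR_j=R_jE_i$, $E_iE_j=E_jE_i$; for adjacent $i,j$: $R_iR_jR_i=R_jR_iR_j$, $R_jR_iE_j=E_iE_j$, $R_iE_jR_i=R_jE_iR_j$. *)

From HB Require Import structures.
From mathcomp Require Import all_boot all_order all_algebra.
Set Implicit Arguments. Unset Strict Implicit. Unset Printing Implicit Defensive.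
Import GRing.Theory.
Local Open Scope ring_scope.

(* A unital Z[delta^{+-1}]-algebra is a (unital) ring A together with the
   image d of delta, which is a central unit of A. *)
Definition Zdelta_algebra (A : pzRingType) (d : A) : Prop :=
  (exists di : A, d * di = 1 /\ di * d = 1) /\ (forall x : A, d * x = x * d).

Definition adjE6 (i j : nat) : bool :=
  [|| (i == 1%N) && (j == 3%N), (i == 3%N) && (j == 1%N),
      (i == 3%N) && (j == 4%N), (i == 4%N) && (j == 3%N),
      (i == 4%N) && (j == 5%N), (i == 5%N) && (j == 4%N),
      (i == 5%N) && (j == 6%N), (i == 6%N) && (j == 5%N),
      (i == 2%N) && (j == 4%N) | (i == 4%N) && (j == 2%N)].

Definition nodeE6 (i : nat) : bool := (1 <= i <= 6)%N.

Record BrE6_relations (A : pzRingType) (d : A) (R E : nat -> A) : Prop := {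
  e6_rr : forall i, nodeE6 i -> R i * R i = 1;
  e6_re : forall i, nodeE6 i -> R i * E i = E i;
  e6_er : forall i, nodeE6 i -> E i * R i = E i;
  e6_ee : forall i, nodeE6 i -> E i * E i = d * E i;
  e6_comm_rr : forall i j, nodeE6 i -> nodeE6 j -> i != j -> ~~ adjE6 i j ->
      R i * R j = R j * R i;
  e6_comm_er : forall i j, nodeE6 i -> nodeE6 j -> i != j -> ~~ adjE6 i j ->
      E i * R j = R j * E i;
  e6_comm_ee : forall i j, nodeE6 i -> nodeE6 j -> i != j -> ~~ adjE6 i j ->
      E i * E j = E j * E i;
  e6_braid : forall i j, adjE6 i j -> R i * R j * R i = R j * R i * R j;
  e6_rre : forall i j, adjE6 i j -> R j * R i * E j = E i * E j;
  e6_rer : forall i j, adjE6 i j -> R i * E j * R i = R j * E i * R j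
}.

Definition nodeF4 (i : nat) : bool := (1 <= i <= 4)%N.

Definition commF4 (i j : nat) : bool :=
  [|| (i == 1%N) && (j == 3%N), (i == 3%N) && (j == 1%N),
      (i == 1%N) && (j == 4%N), (i == 4%N) && (j == 1%N),
      (i == 2%N) && (j == 4%N) | (i == 4%N) && (j == 2%N)].

Definition simplyLacedF4 (i j : nat) : bool :=
  [|| (i == 1%N) && (j == 2%N), (i == 2%N) && (j == 1%N),
      (i == 3%N) && (j == 4%N) | (i == 4%N) && (j == 3%N)].

Record BrF4_relations (A : pzRingType) (d : A) (r e : nat -> A) : Prop := {
  f4_rr : forall i, nodeF4 i -> r i * r i = 1;
  f4_re : forall i, nodeF4 i -> r i * e i = e i;
  f4_er : forall i, nodeF4 i -> e i * r i = e i;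
  f4_ee_short : forall i, (i == 3%N) || (i == 4%N) -> e i * e i = d * e i;
  f4_ee_long : forall i, (i == 1%N) || (i == 2%N) -> e i * e i = d ^+ 2 * e i;
  f4_comm_rr : forall i j, commF4 i j -> r i * r j = r j * r i;
  f4_comm_er : forall i j, commF4 i j -> e i * r j = r j * e i;
  f4_comm_ee : forall i j, commF4 i j -> e i * e j = e j * e i;
  f4_braid : forall i j, simplyLacedF4 i j -> r i * r j * r i = r j * r i * r j;
  f4_rre : forall i j, simplyLacedF4 i j -> r j * r i * e j = e i * e j;
  f4_rer : forall i j, simplyLacedF4 i j -> r i * e j * r i = r j * e i * r j;
  f4_braid4 : r 2%N * r 3%N * r 2%N * r 3%N = r 3%N * r 2%N * r 3%N * r 2%N;
  f4_x1 : r 2%N * r 3%N * e 2%N = r 3%N * e 2%N;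
  f4_x2 : r 2%N * e 3%N * r 2%N * e 3%N = e 3%N * e 2%N * e 3%N;
  f4_x3 : (r 2%N * r 3%N * r 2%N) * e 3%N = e 3%N * (r 2%N * r 3%N * r 2%N);
  f4_x4 : e 2%N * r 3%N * e 2%N = d * e 2%N;
  f4_x5 : e 2%N * e 3%N * e 2%N = d * e 2%N;
  f4_x6 : e 2%N * r 3%N * r 2%N = e 2%N * r 3%N;
  f4_x7 : e 2%N * e 3%N * r 2%N = e 2%N * e 3%N
}.

Definition phi_r (A : pzRingType) (R : nat -> A) (i : nat) : A :=
  match i with
  | 1 => R 1%N * R 6%N
  | 2 => R 3%N * R 5%N
  | 3 => R 4%N
  | 4 => R 2%N
  | _ => 0
  end.

Definition phi_e (A : pzRingType) (E : nat -> A) (i : nat) : A :=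
  match i with
  | 1 => E 1%N * E 6%N
  | 2 => E 3%N * E 5%N
  | 3 => E 4%N
  | 4 => E 2%N
  | _ => 0
  end.

(* The long simple roots of F4 are obtained from E6 by folding along its
   diagram automorphism: nodes 1, 2 of F4 become the orbits {1, 6}, {3, 5},
   and the short nodes 3, 4 are the fixed nodes 4, 2.  The image of a long
   generator is a product of two commuting copies of an E6 generator, so every
   simply-laced relation among long nodes holds factorwise.  The relations of
   F4 that mix lengths only involve the path 3 - 4 - 5 of E6 with 3, 5
   orthogonal, i.e. a folding of A3 onto B2, and are checked by rewriting
   words in the Brauer relations of E6. *)
From HB Require Import structures.
From mathcomp Require Import all_boot all_order all_algebra.
Import GRing.Theory.
Local Open Scope ring_scope.

Lemma subword2 {A : pzRingType} {a b c : A} :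
  a * b = c -> forall p, p * a * b = p * c.
Proof. by move=> <- p; rewrite mulrA. Qed.

Lemma subword3 {A : pzRingType} {a b c x : A} :
  a * b * c = x -> forall p, p * a * b * c = p * x.
Proof. by move=> <- p; rewrite !mulrA. Qed.

(* [rewrite_word h], for [h : w = w'], brings the goal to left-associated form
   and rewrites the rightmost occurrence of the word [w] in its left-hand side,
   then drops the factors 1. *)
Ltac rewrite_word h :=
  rewrite ?mulrA;
  first [ rewrite [in LHS](subword3 h) | rewrite [in LHS](subword2 h)
        | rewrite [in LHS]h ];
  rewrite ?mulrA ?mulr1 ?mul1r.

Section Words.
Variable A : pzRingType.
Implicit Types a b c s t u w x : A.

Lemma mulrACA_comm a a' b b' : GRing.comm b a' ->
  a * a' * (b * b') = a * b * (a' * b').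
Proof. by move=> ba'; rewrite -!mulrA (mulrA a') -ba' !mulrA. Qed.

Lemma mulrACA3_comm a a' b b' c c' :
  GRing.comm b a' -> GRing.comm c a' -> GRing.comm c b' ->
  a * a' * (b * b') * (c * c') = a * b * c * (a' * b' * c').
Proof.
move=> ba' ca' cb'; rewrite (mulrACA_comm a a') // mulrACA_comm //.
exact: commrM.
Qed.

Lemma commr_involution_conj w x : w * w = 1 -> w * x * w = x -> GRing.comm w x.
Proof. by move=> ww wxw; rewrite /GRing.comm -{2}wxw -mulrA ww mulr1. Qed.

Lemma braid4_commuting_pair s t u : s * t = t * s ->
  s * u * s = u * s * u -> t * u * t = u * t * u ->
  s * t * u * (s * t) * u = u * (s * t) * u * (s * t).
Proof.
move=> st sus tut.
rewrite_word st; rewrite_word tut; rewrite_word (esym sus); rewrite_word (esym st).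
rewrite_word sus; rewrite_word (esym tut); by rewrite_word (esym st).
Qed.

End Words.

Section Doubling.
Context {A : pzRingType} {r1 e1 r2 e2 s1 f1 s2 f2 : A}.
Hypothesis copies_commute :
  {in [:: r1; e1; r2; e2] & [:: s1; f1; s2; f2], forall u v, GRing.comm u v}.

Local Ltac copies := solve [ apply: copies_commute; by rewrite !inE eqxx ?orbT
  | apply: commr_sym; apply: copies_commute; by rewrite !inE eqxx ?orbT ].

Lemma doubled_rr : r1 * r1 = 1 -> s1 * s1 = 1 -> r1 * s1 * (r1 * s1) = 1.
Proof. by move=> rr ss; rewrite mulrACA_comm ?rr ?ss ?mulr1 //; copies. Qed.

Lemma doubled_re : r1 * e1 = e1 -> s1 * f1 = f1 -> r1 * s1 * (e1 * f1) = e1 * f1.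
Proof. by move=> re sf; rewrite mulrACA_comm ?re ?sf //; copies. Qed.

Lemma doubled_er : e1 * r1 = e1 -> f1 * s1 = f1 -> e1 * f1 * (r1 * s1) = e1 * f1.
Proof. by move=> er fs; rewrite mulrACA_comm ?er ?fs //; copies. Qed.

Lemma doubled_ee d : GRing.comm e1 d -> e1 * e1 = d * e1 -> f1 * f1 = d * f1 ->
  e1 * f1 * (e1 * f1) = d ^+ 2 * (e1 * f1).
Proof.
move=> e1d ee ff; rewrite mulrACA_comm ?ee ?ff; last by copies.
by rewrite -mulrA (mulrA e1) e1d expr2 !mulrA.
Qed.

Lemma doubled_braid : r1 * r2 * r1 = r2 * r1 * r2 -> s1 * s2 * s1 = s2 * s1 * s2 ->
  r1 * s1 * (r2 * s2) * (r1 * s1) = r2 * s2 * (r1 * s1) * (r2 * s2).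
Proof. by move=> rb sb; rewrite !mulrACA3_comm ?rb ?sb //; copies. Qed.

Lemma doubled_rre : r2 * r1 * e2 = e1 * e2 -> s2 * s1 * f2 = f1 * f2 ->
  r2 * s2 * (r1 * s1) * (e2 * f2) = e1 * f1 * (e2 * f2).
Proof.
move=> rre sff; rewrite mulrACA3_comm ?rre ?sff; try copies.
by rewrite [in RHS]mulrACA_comm //; copies.
Qed.

Lemma doubled_rer : r1 * e2 * r1 = r2 * e1 * r2 -> s1 * f2 * s1 = s2 * f1 * s2 ->
  r1 * s1 * (e2 * f2) * (r1 * s1) = r2 * s2 * (e1 * f1) * (r2 * s2).
Proof. by move=> rer sfs; rewrite !mulrACA3_comm ?rer ?sfs //; copies. Qed.

End Doubling.

Lemma adjE6C i j : adjE6 i j = adjE6 j i.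
Proof.
by case: i => [|[|[|[|[|[|[|i]]]]]]]; case: j => [|[|[|[|[|[|[|j]]]]]]].
Qed.

Lemma adjE6_node i j : adjE6 i j -> nodeE6 i.
Proof.
by case: i => [|[|[|[|[|[|[|i]]]]]]]; case: j => [|[|[|[|[|[|[|j]]]]]]].
Qed.

Definition farE6 i j := [&& nodeE6 i, nodeE6 j, i != j & ~~ adjE6 i j].

Lemma farE6C i j : farE6 i j = farE6 j i.
Proof. by rewrite /farE6 adjE6C eq_sym andbCA. Qed.

Section BrauerE6.
Context {A : pzRingType} {d : A} {R E : nat -> A} (HE6 : BrE6_relations d R E).

Section Far.
Context {i j : nat} (ij : farE6 i j).

Lemma far_RR : R i * R j = R j * R i.
Proof. by case/and4P: ij => *; apply: (e6_comm_rr HE6). Qed.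

Lemma far_ER : E i * R j = R j * E i.
Proof. by case/and4P: ij => *; apply: (e6_comm_er HE6). Qed.

Lemma far_EE : E i * E j = E j * E i.
Proof. by case/and4P: ij => *; apply: (e6_comm_ee HE6). Qed.

End Far.

Lemma far_RE {i j} : farE6 i j -> R i * E j = E j * R i.
Proof. by rewrite farE6C => /far_ER ->. Qed.

Local Ltac commute_far :=
  first [exact: far_RR | exact: far_RE | exact: far_ER | exact: far_EE].

Lemma far_copies_commute a a' b b' :
  farE6 a a' -> farE6 a b' -> farE6 b a' -> farE6 b b' ->
  {in [:: R a; E a; R b; E b] & [:: R a'; E a'; R b'; E b'],
    forall u v, GRing.comm u v}.
Proof.
by move=> ? ? ? ? u v; rewrite !inE => /or4P[]/eqP-> /or4P[]/eqP->; commute_far.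
Qed.

Section Adjacent.
Context {i j : nat} (ij : adjE6 i j).
Let ji : adjE6 j i. Proof. by rewrite adjE6C. Qed.
Let ni : nodeE6 i. Proof. exact: adjE6_node ij. Qed.
Let nj : nodeE6 j. Proof. exact: adjE6_node ji. Qed.

Lemma adj_EEE : E i * E j * E i = E i.
Proof.
rewrite -(e6_rre HE6 ij) -mulrA -(e6_rre HE6 ji) !mulrA.
by rewrite_word (e6_rr HE6 ni); rewrite (e6_rr HE6 nj) mul1r.
Qed.

Lemma adj_REE : R j * E i * E j = R i * E j.
Proof. by rewrite -mulrA -(e6_rre HE6 ij) !mulrA (e6_rr HE6 nj) mul1r. Qed.

Lemma adj_ERR : E j * R i * R j = E j * E i.
Proof.
have -> : E j * R i = R i * (R j * E i * R j).
  by rewrite -(e6_rer HE6 ij) !mulrA (e6_rr HE6 ni) mul1r.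
by rewrite -!mulrA (e6_rr HE6 nj) mulr1 !mulrA (e6_rre HE6 ji).
Qed.

Lemma adj_EER : E j * E i * R j = E j * R i.
Proof. by rewrite -adj_ERR -!mulrA (e6_rr HE6 nj) mulr1. Qed.

End Adjacent.

Section A3Folding.
Context (a b c : nat) (ab : adjE6 a b) (bc : adjE6 b c) (ac : farE6 a c).
Let ba : adjE6 b a. Proof. by rewrite adjE6C. Qed.
Let cb : adjE6 c b. Proof. by rewrite adjE6C. Qed.
Let ca : farE6 c a. Proof. by rewrite farE6C. Qed.
Let na : nodeE6 a. Proof. exact: adjE6_node ab. Qed.
Let nb : nodeE6 b. Proof. exact: adjE6_node bc. Qed.
Let nc : nodeE6 c. Proof. exact: adjE6_node cb. Qed.

Local Notation s := (R a * R c).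
Local Notation t := (E a * E c).

Lemma fold_braid4 : s * R b * s * R b = R b * s * R b * s.
Proof. exact: braid4_commuting_pair (far_RR ac) (e6_braid HE6 ab) (e6_braid HE6 cb). Qed.

Lemma fold_sRt : s * R b * t = R b * t.
Proof.
rewrite_word (far_RR ac); rewrite_word (e6_rre HE6 ba); rewrite_word (far_EE ac).
by rewrite_word (adj_REE bc); rewrite_word (far_EE ca).
Qed.

Lemma fold_sEsE : s * E b * s * E b = E b * t * E b.
Proof.
rewrite_word (far_RR ac); rewrite_word (e6_rer HE6 cb); rewrite_word (e6_rre HE6 ab).
by rewrite_word (far_EE ca); rewrite_word (e6_rre HE6 ba).
Qed.

Lemma fold_sRsE_comm : s * R b * s * E b = E b * (s * R b * s).
Proof.
have -> : s * R b * s = R a * R b * R c * R b * R a.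
  by rewrite_word (far_RR ac); rewrite_word (e6_braid HE6 cb).
apply: commr_involution_conj.
  rewrite_word (e6_rr HE6 na); rewrite_word (e6_rr HE6 nb).
  rewrite_word (e6_rr HE6 nc); rewrite_word (e6_rr HE6 nb).
  exact: (e6_rr HE6 na).
rewrite_word (e6_rer HE6 ab); rewrite_word (e6_rr HE6 nb); rewrite_word (e6_rr HE6 nb).
rewrite_word (far_RE ca); rewrite_word (e6_rr HE6 nc); rewrite_word (e6_rer HE6 ba).
by rewrite_word (e6_rr HE6 na); rewrite_word (e6_rr HE6 na).
Qed.

Lemma fold_tRt : t * R b * t = d * t.
Proof.
rewrite_word (esym (adj_EER bc)); rewrite_word (far_RE ca); rewrite_word (e6_re HE6 nc).
rewrite_word (far_EE ac); rewrite_word (adj_EEE cb); rewrite_word (far_EE ca).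
by rewrite_word (e6_ee HE6 na).
Qed.

Lemma fold_tEt : t * E b * t = d * t.
Proof.
rewrite_word (far_EE ac); rewrite_word (adj_EEE cb); rewrite_word (far_EE ca).
by rewrite_word (e6_ee HE6 na).
Qed.

Lemma fold_tRs : t * R b * s = t * R b.
Proof.
rewrite_word (far_RR ac); rewrite_word (adj_ERR bc); rewrite_word (far_EE ac).
by rewrite_word (adj_EER ba); rewrite_word (far_EE ca).
Qed.

Lemma fold_tEs : t * E b * s = t * E b.
Proof.
rewrite_word (far_RR ac); rewrite_word (adj_EER bc); rewrite_word (far_EE ac).
by rewrite_word (adj_ERR ba); rewrite_word (far_EE ca).
Qed.

End A3Folding.

Let copies_16_35 := far_copies_commute 1 6 3 5 isT isT isT isT.
Let copies_35_16 := far_copies_commute 3 5 1 6 isT isT isT isT.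

Lemma phi_rr i : nodeF4 i -> phi_r R i * phi_r R i = 1.
Proof.
case: i => [|[|[|[|[|i]]]]] //= _.
- exact: doubled_rr copies_16_35 (e6_rr HE6 _) (e6_rr HE6 _).
- exact: doubled_rr copies_35_16 (e6_rr HE6 _) (e6_rr HE6 _).
- exact: (e6_rr HE6).
- exact: (e6_rr HE6).
Qed.

Lemma phi_re i : nodeF4 i -> phi_r R i * phi_e E i = phi_e E i.
Proof.
case: i => [|[|[|[|[|i]]]]] //= _.
- exact: doubled_re copies_16_35 (e6_re HE6 _) (e6_re HE6 _).
- exact: doubled_re copies_35_16 (e6_re HE6 _) (e6_re HE6 _).
- exact: (e6_re HE6).
- exact: (e6_re HE6).
Qed.

Lemma phi_er i : nodeF4 i -> phi_e E i * phi_r R i = phi_e E i.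
Proof.
case: i => [|[|[|[|[|i]]]]] //= _.
- exact: doubled_er copies_16_35 (e6_er HE6 _) (e6_er HE6 _).
- exact: doubled_er copies_35_16 (e6_er HE6 _) (e6_er HE6 _).
- exact: (e6_er HE6).
- exact: (e6_er HE6).
Qed.

Lemma phi_ee_short i : (i == 3%N) || (i == 4%N) ->
  phi_e E i * phi_e E i = d * phi_e E i.
Proof. by case/orP=> /eqP->; apply: (e6_ee HE6). Qed.

Lemma phi_ee_long (dC : forall x, d * x = x * d) i : (i == 1%N) || (i == 2%N) ->
  phi_e E i * phi_e E i = d ^+ 2 * phi_e E i.
Proof.
case/orP=> /eqP-> /=.
- exact: doubled_ee copies_16_35 d (esym (dC _)) (e6_ee HE6 _) (e6_ee HE6 _).
- exact: doubled_ee copies_35_16 d (esym (dC _)) (e6_ee HE6 _) (e6_ee HE6 _).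
Qed.

Local Ltac commute_far_products :=
  first [apply: commrM | apply: commr_sym; apply: commrM]; commute_far.

Lemma phi_comm_rr i j : commF4 i j -> phi_r R i * phi_r R j = phi_r R j * phi_r R i.
Proof.
by case: i j => [|[|[|[|[|i]]]]] [|[|[|[|[|j]]]]] //= _; commute_far_products.
Qed.

Lemma phi_comm_er i j : commF4 i j -> phi_e E i * phi_r R j = phi_r R j * phi_e E i.
Proof.
by case: i j => [|[|[|[|[|i]]]]] [|[|[|[|[|j]]]]] //= _; commute_far_products.
Qed.

Lemma phi_comm_ee i j : commF4 i j -> phi_e E i * phi_e E j = phi_e E j * phi_e E i.
Proof.
by case: i j => [|[|[|[|[|i]]]]] [|[|[|[|[|j]]]]] //= _; commute_far_products.
Qed.

Lemma phi_braid i j : simplyLacedF4 i j ->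
  phi_r R i * phi_r R j * phi_r R i = phi_r R j * phi_r R i * phi_r R j.
Proof.
case: i j => [|[|[|[|[|i]]]]] [|[|[|[|[|j]]]]] //= _.
- exact: doubled_braid copies_16_35 (e6_braid HE6 _) (e6_braid HE6 _).
- exact: doubled_braid copies_35_16 (e6_braid HE6 _) (e6_braid HE6 _).
- exact: (e6_braid HE6).
- exact: (e6_braid HE6).
Qed.

Lemma phi_rre i j : simplyLacedF4 i j ->
  phi_r R j * phi_r R i * phi_e E j = phi_e E i * phi_e E j.
Proof.
case: i j => [|[|[|[|[|i]]]]] [|[|[|[|[|j]]]]] //= _.
- exact: doubled_rre copies_16_35 (e6_rre HE6 _) (e6_rre HE6 _).
- exact: doubled_rre copies_35_16 (e6_rre HE6 _) (e6_rre HE6 _).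
- exact: (e6_rre HE6).
- exact: (e6_rre HE6).
Qed.

Lemma phi_rer i j : simplyLacedF4 i j ->
  phi_r R i * phi_e E j * phi_r R i = phi_r R j * phi_e E i * phi_r R j.
Proof.
case: i j => [|[|[|[|[|i]]]]] [|[|[|[|[|j]]]]] //= _.
- exact: doubled_rer copies_16_35 (e6_rer HE6 _) (e6_rer HE6 _).
- exact: doubled_rer copies_35_16 (e6_rer HE6 _) (e6_rer HE6 _).
- exact: (e6_rer HE6).
- exact: (e6_rer HE6).
Qed.

End BrauerE6.

Theorem proposition2p3 (A : pzRingType) (d : A) (R E : nat -> A) :
  Zdelta_algebra d ->
  BrE6_relations d R E ->
  BrF4_relations d (phi_r R) (phi_e E).
Proof.
move=> [_ dC] HE6; split.
- exact: phi_rr HE6.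
- exact: phi_re HE6.
- exact: phi_er HE6.
- exact: phi_ee_short HE6.
- exact: phi_ee_long HE6 dC.
- exact: phi_comm_rr HE6.
- exact: phi_comm_er HE6.
- exact: phi_comm_ee HE6.
- exact: phi_braid HE6.
- exact: phi_rre HE6.
- exact: phi_rer HE6.
- exact: fold_braid4 HE6 3 4 5 isT isT isT.
- exact: fold_sRt HE6 3 4 5 isT isT isT.
- exact: fold_sEsE HE6 3 4 5 isT isT isT.
- exact: fold_sRsE_comm HE6 3 4 5 isT isT isT.
- exact: fold_tRt HE6 3 4 5 isT isT isT.
- exact: fold_tEt HE6 3 4 5 isT isT isT.
- exact: fold_tRs HE6 3 4 5 isT isT isT.
- exact: fold_tEs HE6 3 4 5 isT isT isT.
Qed.
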